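(* Let $G$ be a simple graph whose edges are colored red and blue, and let $C_1$ and $C_2$ be two vertex-disjoint alternating cycles in $G$. If there is a good pair of edges between $C_1$ and $C_2$, then $G$ contains an alternating cycle whose vertex set is exactly $V(C_1)\cup V(C_2)$.
   Context: An alternating cycle (path) in a 2-edge-colored graph is a cycle (path) in which any two consecutive edges have different colors. For a vertex $v$ on an alternating cycle $C$, $v^r$ (resp. $v^b$) denotes the neighbor of $v$ on $C$ such that the edge $vv^r$ of $C$ is red (resp. $vv^b$ is blue). Given two vertex-disjoint alternating cycles $C_1,C_2$ and an edge $vw\in E(G)$ with $v\in V(C_1)$, $w\in V(C_2)$: if $vw$ is red, the pair $vw, v^rw^r$ is a good pair of edges when $v^rw^r$ is an edge of $G$ colored red (here $v^r$ taken on $C_1$, $w^r$ on $C_2$); if $vw$ is blue, the pair $vw, v^bw^b$ is a good pair of edges when $v^bw^b$ is an edge of $G$ colored blue. ''There is a good pair between $C_1$ and $C_2$'' means some such good pair of edges exists. *)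

From mathcomp Require Import all_boot.
Set Implicit Arguments. Unset Strict Implicit. Unset Printing Implicit Defensive.

(* A 2-edge-colouring: col x y : bool, true = red, false = blue,
   assumed symmetric on edges.
   A cycle is represented by the sequence of its vertices in cyclic order. *)

Definition simple_graph (T : finType) (e : rel T) :=
  symmetric e /\ irreflexive e.

Definition edge_coloring (T : finType) (e : rel T) (col : T -> T -> bool) :=
  forall x y, e x y -> col x y = col y x.

Definition alt_cycle (T : finType) (e : rel T) (col : T -> T -> bool)
    (c : seq T) : bool :=
  [&& uniq c, 2 < size c, cycle e c &
      all (fun x => col x (next c x) != col (next c x) (next c (next c x))) c].

(* The neighbour v^b of v on the cycle c such that the cycle edge v v^b
   has colour b (b = true: v^r, b = false: v^b). *)
Definition cnbr (T : finType) (col : T -> T -> bool) (c : seq T) (b : bool)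
    (v : T) : T :=
  if col v (next c v) == b then next c v else prev c v.

Definition good_pair (T : finType) (e : rel T) (col : T -> T -> bool)
    (c1 c2 : seq T) : Prop :=
  exists v w, [/\ v \in c1, w \in c2, e v w,
    e (cnbr col c1 (col v w) v) (cnbr col c2 (col v w) w) &
    col (cnbr col c1 (col v w) v) (cnbr col c2 (col v w) w) = col v w].

(* Let vw, v'w' be the good pair, of colour b; then vv' and ww' are the cycle
   edges of colour b at v and w.  Replacing vv' and ww' by vw and v'w' merges
   C1 and C2 into one cycle, and it is still alternating: at each of v, v', w, w'
   the removed edge is replaced by an edge of the same colour b, so every vertex
   still meets one cycle edge of each colour. *)

From mathcomp Require Import all_boot.
Set Implicit Arguments. Unset Strict Implicit.

Section NextPrevCat.
Variables (T : eqType) (x y : T) (s t : seq T).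

Lemma next_last : uniq (x :: s) -> next (x :: s) (last x s) = x.
Proof.
by move=> Uxs; rewrite next_nth mem_last index_last // nth_default.
Qed.

Lemma prev_head : uniq (x :: s) -> prev (x :: s) x = last x s.
Proof.
case/andP=> xNs _.
by rewrite prev_nth mem_head (memNindex xNs) (last_nth x).
Qed.

Hypothesis Up : uniq (x :: s ++ y :: t).

Let Uxs : uniq (x :: s).
Proof. by move: Up; rewrite -cat_cons cat_uniq => /and3P[]. Qed.

Lemma next_splice z : z \in x :: s ->
  next (x :: s ++ y :: t) z = if z == last x s then y else next (x :: s) z.
Proof.
move=> zxs; have zp : z \in x :: s ++ y :: t by rewrite -cat_cons mem_cat zxs.
rewrite !next_nth zp zxs -cat_cons index_cat zxs.
have := zxs; rewrite -index_mem; set i := index z _ => /= iz.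
rewrite nth_cat; case: eqP => [zl|zNl].
  by rewrite /i zl index_last // ltnn subnn.
suff -> : i < size s by [].
rewrite ltn_neqAle -ltnS iz andbT; apply/eqP => isz; apply: zNl.
by rewrite -(nth_index x zxs) -/i isz -(last_nth x).
Qed.

Lemma prev_splice z : z \in x :: s ->
  prev (x :: s ++ y :: t) z = if z == x then last y t else prev (x :: s) z.
Proof.
move=> zxs; have zp : z \in x :: s ++ y :: t by rewrite -cat_cons mem_cat zxs.
rewrite !prev_nth zp zxs; case: eqP => [zx | /eqP zNx].
  have /andP[xNst _] := Up.
  by rewrite zx (memNindex xNst) -(last_nth x) last_cat.
have zs : z \in s by move: zxs; rewrite inE (negbTE zNx).
by rewrite index_cat zs -cat_cons nth_cat /= ltnS index_size.
Qed.

End NextPrevCat.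

Lemma cycle_adjacentC (T : eqType) (c : seq T) u v : uniq c ->
  v \in [:: prev c u; next c u] -> u \in [:: prev c v; next c v].
Proof.
by move=> Uc; rewrite !inE => /orP[]/eqP->; rewrite ?next_prev ?prev_next // eqxx ?orbT.
Qed.

Lemma mem_cycle_adjacent (T : eqType) (c : seq T) u v :
  v \in [:: prev c u; next c u] -> (v \in c) = (u \in c).
Proof. by rewrite !inE => /orP[]/eqP->; rewrite ?mem_prev ?mem_next. Qed.

Lemma uniq_cat_disjoint (T : finType) (c1 c2 : seq T) :
  uniq c1 -> uniq c2 -> [disjoint c1 & c2] -> uniq (c1 ++ c2).
Proof.
by move=> U1 U2; rewrite disjoint_sym disjoint_has cat_uniq U1 U2 => ->.
Qed.

Section AltCycle.
Variables (T : finType) (e : rel T) (col : T -> T -> bool).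
Hypotheses (e_sym : symmetric e) (col_sym : edge_coloring e col).

Definition alt_at (c : seq T) (u : T) := col u (prev c u) != col u (next c u).

Lemma alt_cycleE c :
  alt_cycle e col c = [&& uniq c, 2 < size c, cycle e c & all (alt_at c) c].
Proof.
rewrite /alt_cycle; have [Uc|] //= := boolP (uniq c); case: (2 < size c) => //=.
have [Cc|] //= := boolP (cycle e c).
apply/allP/allP => alt u uc.
  have := alt (prev c u); rewrite mem_prev => /(_ uc); rewrite next_prev // /alt_at.
  by rewrite [col (prev c u) u]col_sym // prev_cycle.
have := alt (next c u); rewrite mem_next => /(_ uc); rewrite /alt_at prev_next //.
by rewrite [col (next c u) u]col_sym // e_sym next_cycle.
Qed.

Lemma alt_cycle_rot n c : alt_cycle e col (rot n c) = alt_cycle e col c.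
Proof.
rewrite !alt_cycleE rot_uniq size_rot rot_cycle.
have [Uc|] //= := boolP (uniq c); congr [&& _, _ & _].
rewrite (eq_all_r (mem_rot n c)); apply: eq_all => u.
by rewrite /alt_at next_rot // prev_rot.
Qed.

Lemma alt_cycle_rev c : alt_cycle e col (rev c) = alt_cycle e col c.
Proof.
rewrite !alt_cycleE rev_uniq size_rev rev_cycle all_rev.
rewrite (eq_cycle (e' := e)); last by move=> u v; rewrite e_sym.
have [Uc|] //= := boolP (uniq c); congr [&& _, _ & _].
by apply: eq_all => u; rewrite /alt_at next_rev // prev_rev // eq_sym.
Qed.

Lemma alt_cycle_open_at c a a' :
  alt_cycle e col c -> a \in c -> a' \in [:: prev c a; next c a] ->
  exists s, [/\ alt_cycle e col (a :: s), a :: s =i c & last a s = a'].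
Proof.
have open_prev d : alt_cycle e col d -> a \in d ->
    exists s, [/\ alt_cycle e col (a :: s), a :: s =i d & last a s = prev d a].
  move=> alt_d ad; have [i s rot_d] := rot_to ad.
  have Ud : uniq d by case/and4P: alt_d.
  exists s; split.
  - by rewrite -rot_d alt_cycle_rot.
  - by move=> u; rewrite -rot_d mem_rot.
  - by rewrite -(prev_rot i Ud) rot_d prev_head // -rot_d rot_uniq.
move=> alt_c ac; rewrite !inE => /orP[/eqP -> | /eqP ->]; first exact: open_prev.
have Uc : uniq c by case/and4P: alt_c.
have := open_prev (rev c); rewrite alt_cycle_rev mem_rev prev_rev //.
case=> // s [alt_s rev_s last_s]; exists s; split=> // u.
by rewrite rev_s mem_rev.
Qed.

Lemma cnbr_adjacent c b u : cnbr col c b u \in [:: prev c u; next c u].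
Proof. by rewrite /cnbr; case: ifP; rewrite !inE eqxx ?orbT. Qed.

Lemma cnbr_edge c b u : cycle e c -> u \in c -> e u (cnbr col c b u).
Proof.
move=> Cc uc; rewrite /cnbr; case: ifP => _; first exact: next_cycle.
by rewrite e_sym prev_cycle.
Qed.

Lemma col_cnbr c b u : alt_cycle e col c -> u \in c -> col u (cnbr col c b u) = b.
Proof.
rewrite alt_cycleE => /and4P[_ _ _ /allP alt_c] /alt_c; rewrite /alt_at /cnbr.
by case: ifP => [/eqP //|]; case: b; case: (col u (next c u)); case: (col u _).
Qed.

Lemma splice_alt_at b x y s t :
  alt_cycle e col (x :: s) -> uniq (x :: s ++ y :: t) ->
  e (last x s) y -> e (last y t) x ->
  col (last x s) x = b -> col (last x s) y = b -> col (last y t) x = b ->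
  {in x :: s, forall z,
    e z (next (x :: s ++ y :: t) z) && alt_at (x :: s ++ y :: t) z}.
Proof.
rewrite alt_cycleE => /and4P[Uxs _ Cxs /allP alt_xs] Up e_xy e_yx cx cxy cyx z zxs.
have e_xsx : e (last x s) x.
  by have := next_cycle Cxs (mem_last x s); rewrite next_last.
rewrite /alt_at next_splice // prev_splice //; apply/andP; split.
  by case: eqP => [->|_]; [exact: e_xy | exact: next_cycle].
have -> : col z (if z == x then last y t else prev (x :: s) z) =
          col z (prev (x :: s) z).
  case: eqP => [-> | _] //.
  by rewrite prev_head // [col x _]col_sym 1?e_sym // cyx -cx col_sym.
have -> : col z (if z == last x s then y else next (x :: s) z) =
          col z (next (x :: s) z).
  by case: eqP => [-> | _] //; rewrite next_last // cxy cx.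
exact: alt_xs.
Qed.

Lemma alt_cycle_splice b x y s t :
  alt_cycle e col (x :: s) -> alt_cycle e col (y :: t) ->
  [disjoint x :: s & y :: t] ->
  e (last x s) y -> e (last y t) x ->
  col (last x s) x = b -> col (last y t) y = b ->
  col (last x s) y = b -> col (last y t) x = b ->
  alt_cycle e col (x :: s ++ y :: t).
Proof.
move=> alt_xs alt_yt dis e_xy e_yx cx cy cxy cyx.
have Up : uniq (x :: s ++ y :: t).
  by rewrite -cat_cons uniq_cat_disjoint //; [case/and4P: alt_xs | case/and4P: alt_yt].
have rot_p : rot (size (x :: s)) (x :: s ++ y :: t) = y :: t ++ x :: s.
  exact: rot_size_cat.
have Up' : uniq (y :: t ++ x :: s) by rewrite -rot_p rot_uniq.
have splice_ok z : z \in x :: s ++ y :: t ->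
    e z (next (x :: s ++ y :: t) z) && alt_at (x :: s ++ y :: t) z.
  rewrite -cat_cons mem_cat => /orP[]; first exact: splice_alt_at Up e_xy e_yx cx cxy cyx z.
  move/(splice_alt_at alt_yt Up' e_yx e_xy cy cyx cxy).
  by rewrite /alt_at -rot_p next_rot // prev_rot.
rewrite alt_cycleE; apply/and4P; split => //.
- by case/and4P: alt_xs => _ size_xs _ _; rewrite -cat_cons size_cat ltn_addr.
- by apply: cycle_from_next => // z /splice_ok /andP[].
- by apply/allP => z /splice_ok /andP[].
Qed.

End AltCycle.

Theorem proposition3p1 (T : finType) (e : rel T) (col : T -> T -> bool)
  (c1 c2 : seq T) :
  simple_graph e -> edge_coloring e col ->
  alt_cycle e col c1 -> alt_cycle e col c2 ->
  [disjoint c1 & c2] ->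
  good_pair e col c1 c2 ->
  exists c : seq T, alt_cycle e col c /\ c =i c1 ++ c2.
Proof.
move=> [e_sym _] col_sym alt_c1 alt_c2 dis [v [w [vc1 wc2 e_vw]]].
set b := col v w; set v' := cnbr col c1 b v; set w' := cnbr col c2 b w.
move=> e_v'w' c_v'w'.
have e_vv' : e v v' by apply: cnbr_edge => //; case/and4P: alt_c1.
have w_adj : w \in [:: prev c2 w'; next c2 w'].
  by apply: cycle_adjacentC (cnbr_adjacent _ _ _ _); case/and4P: alt_c2.
have w'c2 : w' \in c2 by rewrite (mem_cycle_adjacent (cnbr_adjacent _ _ _ _)).
have [s [alt_s s_c1 last_s]] :=
  alt_cycle_open_at e_sym col_sym alt_c1 vc1 (cnbr_adjacent col c1 b v).
have [t [alt_t t_c2 last_t]] := alt_cycle_open_at e_sym col_sym alt_c2 w'c2 w_adj.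
exists (v :: s ++ w' :: t); split; last by move=> u; rewrite -cat_cons !mem_cat s_c1 t_c2.
apply: (alt_cycle_splice e_sym col_sym (b := b) alt_s alt_t); rewrite ?last_s ?last_t //.
- by rewrite (eq_disjoint s_c1) (eq_disjoint_r t_c2).
- by rewrite e_sym.
- by rewrite -col_sym // (col_cnbr e_sym col_sym).
- exact: (col_cnbr e_sym col_sym).
- by rewrite col_sym // e_sym.
Qed.
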